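(* Let $(G,w)$ be a finite connected positively weighted graph whose minimum degree is at least $2$. Then for every natural number $r\ge 1$ and every function $g\colon V(G)\to\mathbb{R}^+$, there exists a vertex $v$ of $G$ such that $$\lambda_1(\widetilde{G}(v,r),w)\ \ge\ \frac{2\sum_{v_1\in V(G)}\sqrt{d(v_1)-1}\sum_{v_2\in N(v_1)} w(v_1v_2)\sqrt{g(v_1)g(v_2)}}{\sum_{u\in V(G)} g(u)d(u)}\cos\left(\frac{\pi}{r+2}\right),$$ where $N(v_1)=\{u\in V(G): v_1u\in E(G)\}$.
   Context: A (positively) weighted graph $(G,w)$ is a simple graph $G$ with a weight function $w\colon E(G)\to\mathbb{R}^+$. $d(u)$ denotes the degree (number of incident edges) of $u$ in $G$. A non-backtracking walk is a walk $(v_0,v_1,\dots)$ with $v_i\neq v_{i+2}$ for all $i$ (walks of length at most $1$ are non-backtracking). The unraveled ball $\widetilde{G}(v,r)$ is the graph whose vertices are all non-backtracking walks in $G$ of length at most $r$ starting at $v$, two walks being adjacent iff one is a one-step extension of the other; it is given the lifted weight $w\big((v_0,\dots,v_{i-1})(v_0,\dots,v_{i-1},v_i)\big)=w(v_{i-1}v_i)$. (Equivalently, it is the ball of radius $r$ about $v$ in the universal cover of $G$.) For a weighted graph $(H,w)$, its adjacency matrix $A(H,w)$ has $(u,v)$-entry $w(uv)$ if $uv\in E(H)$ and $0$ otherwise, and $\lambda_1(H,w)$ denotes the spectral radius of $A(H,w)$ (the weighted spectral radius). *)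

From HB Require Import structures.
From mathcomp Require Import all_boot all_order all_algebra.
From mathcomp Require Import all_classical all_reals all_analysis.
From mathcomp Require Import complex.
Set Implicit Arguments. Unset Strict Implicit. Unset Printing Implicit Defensive.
Import Order.TTheory GRing.Theory Num.Theory.
Local Open Scope ring_scope.

Definition simple_graph (V : finType) (e : rel V) : Prop :=
  (forall x y, e x y = e y x) /\ (forall x, ~~ e x x).

Definition deg (V : finType) (e : rel V) (u : V) : nat := #|[set x | e u x]|.

Definition connected_graph (V : finType) (e : rel V) : Prop :=
  forall x y, connect e x y.

(* a positive weight function on the edges, given as a symmetric function V -> V -> R
   whose values on non-edges are irrelevant *)
Definition pos_weight (R : realType) (V : finType) (e : rel V) (w : V -> V -> R) : Prop :=
  (forall x y, w x y = w y x) /\ (forall x y, e x y -> 0 < w x y).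

Definition nb_walk (V : finType) (e : rel V) (v : V) (s : seq V) : bool :=
  match s with
  | [::] => false
  | x :: t =>
      (x == v) && path e x t &&
      all (fun i => nth v s i != nth v s i.+2) (iota 0 (size s - 2))
  end.

(* candidate vertices of the unraveled ball of radius r: sequences of length k+1, k <= r *)
Definition walk_type (V : finType) (r : nat) : finType :=
  {k : 'I_r.+1 & (k.+1).-tuple V}.

Definition walk_seq (V : finType) (r : nat) (x : walk_type V r) : seq V :=
  tval (tagged x).

Definition ball_set (V : finType) (e : rel V) (v : V) (r : nat) : {set walk_type V r} :=
  [set x | nb_walk e v (walk_seq x)].

Definition one_step_ext (V : eqType) (p q : seq V) : bool :=
  (size q == (size p).+1) && (take (size p) q == p).

Definition ball_adj (R : realType) (V : finType) (e : rel V) (w : V -> V -> R)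
    (v : V) (r : nat) : 'M[R]_#|ball_set e v r| :=
  \matrix_(i, j)
    (let p := walk_seq (enum_val i) in
     let q := walk_seq (enum_val j) in
     if one_step_ext p q || one_step_ext q p then w (last v p) (last v q) else 0).

Definition cmod (R : rcfType) (z : R[i]) : R :=
  Num.sqrt (complex.Re z ^+ 2 + complex.Im z ^+ 2).

Definition spectral_radius (R : realType) (n : nat) (A : 'M[R]_n) : R :=
  sup [set x : R | exists z : R[i],
         eigenvalue (map_mx (fun a : R => (a%:C)%C) A) z /\ x = cmod z].

Definition lambda1_ball (R : realType) (V : finType) (e : rel V) (w : V -> V -> R)
    (v : V) (r : nat) : R :=
  spectral_radius (ball_adj e w v r).

From HB Require Import structures.
From mathcomp Require Import all_boot all_order all_algebra.
From mathcomp Require Import all_classical all_reals all_analysis.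
From mathcomp Require Import complex spectral sesquilinear.
From mathcomp Require Import zify ring.
Import Order.TTheory GRing.Theory Num.Theory.
Local Open Scope ring_scope.
Set Implicit Arguments. Unset Strict Implicit. Unset Printing Implicit Defensive.

(* Fix a root v and test the Rayleigh quotient of the adjacency matrix A_v of the unraveled
   ball on the vector h_v(s) = sin((k+1)t) sqrt(g x) sigma(s), where t = pi/(r+2), s is a
   non-backtracking walk from v with k edges ending at x, sigma(s) is the product of
   (d(u)-1)^(-1/2) over the interior vertices u of s, and sigma = sqrt(d v) for the trivial
   walk.  A non-backtracking walk ending with the edge xy has exactly d(y)-1 extensions, so,
   summed over all roots v, the sigma^2-weighted walks with k >= 1 edges put mass one on
   every directed edge.  With a_k = sin((k+1)t) and D = sum_u g(u) d(u) this gives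
   sum_v |h_v|^2 = D sum_k a_k^2, and sum_v <h_v, A_v h_v> >= 2 N sum_k a_k a_(k+1)
   = 2 N cos t sum_k a_k^2 for the numerator N of the bound (the trivial walks contribute
   sqrt(d x) >= sqrt(d x - 1)).  Hence some root has Rayleigh quotient at least
   2 N cos t / D, and the Rayleigh quotient of a symmetric matrix is at most its spectral
   radius. *)

Section Rayleigh.
Variable R : realType.
Local Notation C := R[i].
Local Open Scope sesquilinear_scope.

Section Normal.
Variables (n : nat) (B : 'M[C]_n).
Hypothesis B_normal : B \is normalmx.
Local Notation P := (spectralmx B).
Local Notation sp := (spectral_diag B).

Lemma spectralmx_diagonalizes : P *m B = diag_mx sp *m P.
Proof.
have /orthomx_spectralP BE := B_normal.
by rewrite [X in P *m X]BE -mulmxA mulKVmx ?spectral_unit.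
Qed.

Lemma spectral_diag_eigenvalue i : eigenvalue B (sp 0 i).
Proof.
apply/eigenvalueP; exists (row i P).
  by rewrite -row_mul spectralmx_diagonalizes mul_diag_mx; apply/rowP => j; rewrite !mxE.
apply: contraTneq (spectral_unit B) => Pi0; apply/negP => /mulmxV.
move/(congr1 (row i)); rewrite row_mul Pi0 mul0mx => /rowP /(_ i).
by rewrite !mxE eqxx => /eqP; rewrite eq_sym oner_eq0.
Qed.

Lemma eigenvalue_spectral_diag z : eigenvalue B z -> exists i, z = sp 0 i.
Proof.
case/eigenvalueP => x xB x_neq0.
set u := x *m invmx P.
have xE : x = u *m P by rewrite /u mulmxKV ?spectral_unit.
clearbody u.
have uD : u *m diag_mx sp = z *: u.
  apply: (row_free_inj (A := P)); first by rewrite row_free_unit spectral_unit.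
  by rewrite -mulmxA -spectralmx_diagonalizes mulmxA -xE xB xE scalemxAl.
have [i ui] : exists i, u 0 i != 0.
  apply/existsP; apply: contraNT x_neq0 => /existsPn u0.
  by rewrite xE (_ : u = 0) ?mul0mx //; apply/rowP => i; rewrite [RHS]mxE; apply/eqP/negbNE/u0.
exists i; move/rowP: uD => /(_ i); rewrite mul_mx_diag !mxE => uiz.
by apply: (mulfI ui); rewrite uiz mulrC.
Qed.

End Normal.

Lemma conjC_real (a : R) : (a%:C)%C^* = (a%:C)%C :> C.
Proof. by apply: conj_Creal; rewrite complex_real. Qed.

Section Symmetric.
Variables (n : nat) (A : 'M[R]_n).
Hypothesis A_sym : forall i j, A i j = A j i.
Local Notation B := (map_mx (fun a : R => (a%:C)%C) A).
Local Notation P := (spectralmx B).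
Local Notation sp := (spectral_diag B).

Lemma complexified_hermsym : B \is hermsymmx.
Proof.
apply: realsym_hermsym; last by apply/mxOverP => i j; rewrite mxE complex_real.
by apply/is_hermitianmxP; rewrite expr0 scale1r; apply/matrixP => i j; rewrite !mxE A_sym.
Qed.

Lemma cmod_spectral_diag_le i : cmod (sp 0 i) <= spectral_radius A.
Proof.
have B_normal := hermitian_normalmx complexified_hermsym.
apply: ub_le_sup; last by exists (sp 0 i); split => //; apply: spectral_diag_eigenvalue.
exists (\sum_j cmod (sp 0 j)) => _ [z [/(eigenvalue_spectral_diag B_normal) [j ->] ->]].
by rewrite (bigD1 j) //= lerDl sumr_ge0 // => k _; apply: sqrtr_ge0.
Qed.

Lemma quad_form_le_spectral_radius (x : 'I_n -> R) :
  \sum_i \sum_j x i * A i j * x j <= spectral_radius A * \sum_i x i ^+ 2.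
Proof.
have B_normal := hermitian_normalmx complexified_hermsym.
have P_unitary : P \is unitarymx := spectral_unitarymx B.
have sp_real i : sp 0 i \is Num.real.
  by have /mxOverP := hermitian_spectral_diag_real complexified_hermsym; apply.
set xc : 'rV[C]_n := \row_i (x i)%:C%C.
set y := xc *m P ^t*.
have yE : xc = y *m P by rewrite /y -invmx_unitary // mulmxKV ?spectral_unit.
have xcE : xc ^t* = P ^t* *m y ^t* by rewrite yE trmx_mul map_mxM.
have PPt : P *m P ^t* = 1%:M by apply/unitarymxP.
have PBPt : P *m B *m P ^t* = diag_mx sp.
  by rewrite spectralmx_diagonalizes // -mulmxA PPt mulmx1.
have normE : ((\sum_i x i ^+ 2)%:C)%C = \sum_i y 0 i * (y 0 i)^*.
  transitivity ((xc *m xc ^t*) 0 0).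
    by rewrite mxE rmorph_sum; apply: eq_bigr => i _; rewrite !mxE conjC_real -rmorphM expr2.
  by rewrite {1}yE xcE mulmxA -(mulmxA y) PPt mulmx1 mxE; apply: eq_bigr => i _; rewrite !mxE.
have formE : ((\sum_i \sum_j x i * A i j * x j)%:C)%C = \sum_i sp 0 i * (y 0 i * (y 0 i)^*).
  transitivity ((xc *m B *m xc ^t*) 0 0).
    rewrite mxE rmorph_sum; under eq_bigr do rewrite rmorph_sum.
    rewrite exchange_big; apply: eq_bigr => j _.
    rewrite !mxE big_distrl; apply: eq_bigr => i _.
    by rewrite !mxE conjC_real !rmorphM.
  have -> : xc *m B *m xc ^t* = y *m (P *m B *m P ^t*) *m y ^t*.
    by rewrite xcE {1}yE !mulmxA.
  rewrite PBPt mul_mx_diag mxE.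
  by apply: eq_bigr => i _; rewrite !mxE; ring.
rewrite -lecR formE.
have -> : ((spectral_radius A * \sum_i x i ^+ 2)%:C)%C =
    \sum_i (spectral_radius A)%:C%C * (y 0 i * (y 0 i)^*).
  by rewrite -mulr_sumr -normE -rmorphM.
apply: ler_sum => i _.
rewrite -normCK ler_wpM2r ?exprn_ge0 //.
apply: le_trans (real_ler_norm (sp_real i)) _.
by rewrite normc_def lecR; apply: cmod_spectral_diag_le.
Qed.

End Symmetric.
End Rayleigh.

Section SineSums.
Variables (R : realType) (t : R).
Local Notation a k := (sin (k.+1%:R * t)).

Lemma sin_three_term k : a k.+1 + sin (k%:R * t) = 2 * cos t * a k.
Proof.
have -> : k.+2%:R * t = k.+1%:R * t + t by rewrite -[k.+2]addn1 natrD; ring.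
have -> : k%:R * t = k.+1%:R * t - t by rewrite -[k.+1]addn1 natrD; ring.
by rewrite sinD sinB; ring.
Qed.

Lemma sum_sin_mul_succ n : a n.+1 = 0 ->
  \sum_(k < n) a k * a k.+1 = cos t * \sum_(k < n.+1) a k ^+ 2.
Proof.
move=> an1; apply: (mulfI (x := 2)); first by rewrite pnatr_eq0.
have shift : \sum_(k < n.+1) a k * sin (k%:R * t) = \sum_(k < n) a k * a k.+1.
  by rewrite big_ord_recl mul0r sin0 mulr0 add0r; apply: eq_bigr => k _; rewrite mulrC.
have last0 : \sum_(k < n.+1) a k * a k.+1 = \sum_(k < n) a k * a k.+1.
  by rewrite big_ord_recr /= an1 mulr0 addr0.
have double : 2 * (cos t * \sum_(k < n.+1) a k ^+ 2)
    = \sum_(k < n.+1) a k * a k.+1 + \sum_(k < n.+1) a k * sin (k%:R * t).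
  rewrite -big_split mulrA mulr_sumr; apply: eq_bigr => k _ /=.
  by rewrite -mulrDr sin_three_term; ring.
by rewrite double last0 shift; ring.
Qed.

End SineSums.

Section SeqsOfSize.
Variable T : finType.

Fixpoint seqs_of_size n : seq (seq T) :=
  if n is n'.+1 then [seq rcons s x | s <- seqs_of_size n', x <- enum T] else [:: [::]].

Lemma mem_seqs_of_size n s : (s \in seqs_of_size n) = (size s == n).
Proof.
elim: n s => [|n IH] s /=; first by case: s.
apply/allpairsP/idP => [[[t x] /= [+ _ ->]]|]; first by rewrite IH size_rcons.
case: s => [//|x t] st; exists (belast x t, last x t).
by rewrite /= IH size_belast mem_enum -lastI.
Qed.

Lemma size_seqs_of_size n s : s \in seqs_of_size n -> size s = n.
Proof. by rewrite mem_seqs_of_size => /eqP. Qed.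

Lemma uniq_seqs_of_size n : uniq (seqs_of_size n).
Proof.
elim: n => [//|n IH] /=; apply: allpairs_uniq => //; first exact: enum_uniq.
by move=> [s1 x1] [s2 x2] _ _ /= /rcons_inj.
Qed.

Variable M : nmodType.

Lemma big_seqs_of_sizeS n (F : seq T -> M) :
  \sum_(s <- seqs_of_size n.+1) F s = \sum_(s <- seqs_of_size n) \sum_x F (rcons s x).
Proof. by rewrite big_allpairs_dep; apply: eq_bigr => s _; rewrite big_enum. Qed.

Lemma big_tuple_seqs_of_size n (F : seq T -> M) :
  \sum_(t : n.-tuple T) F t = \sum_(s <- seqs_of_size n) F s.
Proof.
rewrite -(big_map val xpredT); apply: perm_big; apply: uniq_perm.
- by rewrite map_inj_uniq ?index_enum_uniq //; apply: val_inj.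
- exact: uniq_seqs_of_size.
move=> s; rewrite mem_seqs_of_size; apply/mapP/idP => [[t _ ->]|st].
  by rewrite size_tuple.
by exists (Tuple st); rewrite ?mem_index_enum.
Qed.

End SeqsOfSize.

Section NonBacktracking.
Variables (V : finType) (e : rel V) (v0 : V).

(* Only meaningful when [1 < size s]; [nb_step] does not consult it otherwise. *)
Definition penult (s : seq V) : V := nth v0 s (size s - 2).

Definition nb_step (s : seq V) (z : V) : bool :=
  e (last v0 s) z && ((size s <= 1)%N || (z != penult s)).

Lemma nb_walk1 v x : nb_walk e v [:: x] = (x == v).
Proof. by rewrite /nb_walk /= !andbT. Qed.

Lemma nb_walk_rcons v s z : s != [::] ->
  nb_walk e v (rcons s z) = nb_walk e v s && nb_step s z.
Proof.
case: s => [//|x t] _; rewrite /nb_step /penult /nb_walk rcons_cons rcons_path.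
rewrite -rcons_cons size_rcons; set s := x :: t.
set Pz := (fun i => _ != _); set P := (fun i => _ != _).
have [s_le1|s_ge2] := leqP (size s) 1.
  have -> : ((size s).+1 - 2 = 0)%N by lia.
  have -> : (size s - 2 = 0)%N by lia.
  by rewrite /= !andbT andbA.
rewrite (_ : (size s).+1 - 2 = (size s - 2) + 1)%N; last by lia.
rewrite iotaD add0n all_cat /= andbT.
have -> : all Pz (iota 0 (size s - 2)) = all P (iota 0 (size s - 2)).
  apply: eq_in_all => i; rewrite mem_iota add0n ltn_subRL add2n => /andP[_ i_lt].
  by rewrite /Pz /P !nth_rcons i_lt (ltnW (ltnW i_lt)).
have -> : Pz (size s - 2)%N = (nth v0 s (size s - 2) != z).
  have s2E : (size s - 2).+2 = size s by rewrite -addn2 subnK.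
  have s2_lt : (size s - 2 < size s)%N by rewrite ltn_subrL (ltnW s_ge2).
  by rewrite /Pz !nth_rcons s2E ltnn eqxx s2_lt (set_nth_default v0).
rewrite -[(size t).+1]/(size s) [z == _]eq_sym.
by case: (x == v); case: (path e x t); case: (all P _); case: (e _ z).
Qed.

End NonBacktracking.

Section WalkSums.
Variables (R : realType) (V : finType) (e : rel V) (v0 : V).
Hypothesis e_sym : symmetric e.
Hypothesis deg_ge2 : forall u, (2 <= deg e u)%N.

Local Notation penult := (penult v0).
Local Notation nb_step := (nb_step e v0).

Definition degr (u : V) : R := (deg e u)%:R.

Definition branch_factor (u : V) : R := (Num.sqrt (degr u - 1))^-1.

Definition walk_weight (s : seq V) : R :=
  \prod_(i <- iota 1 (size s - 2)) branch_factor (nth v0 s i).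

Definition walk_sum k (F : seq V -> R) : R :=
  \sum_v \sum_(s <- seqs_of_size V k.+1) (nb_walk e v s)%:R * F s.

Lemma sum_neighbours x : \sum_u ((e x u)%:R : R) = degr x.
Proof.
rewrite /degr /deg -sum1_card natr_sum [in RHS]big_mkcond /=.
by apply: eq_bigr => u _; rewrite inE; case: (e x u).
Qed.

Lemma sum_neighbours_but x z : e x z -> \sum_u ((e u x && (u != z))%:R : R) = degr x - 1.
Proof.
move=> exz; rewrite -sum_neighbours [in RHS](bigD1 z) //= exz addrAC subrr add0r.
by rewrite (bigD1 z) //= eqxx andbF add0r; apply: eq_bigr => u uz; rewrite uz andbT e_sym.
Qed.

Lemma degr_sub1_gt0 u : 0 < degr u - 1.
Proof. by rewrite subr_gt0 ltr1n. Qed.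

Lemma branch_factor_sqrK u : branch_factor u ^+ 2 * (degr u - 1) = 1.
Proof.
by rewrite /branch_factor exprVn sqr_sqrtr ?ltW ?degr_sub1_gt0 // mulVf ?gt_eqF ?degr_sub1_gt0.
Qed.

Lemma branch_factorK u : branch_factor u * (degr u - 1) = Num.sqrt (degr u - 1).
Proof.
have sq_gt0 : 0 < Num.sqrt (degr u - 1) by rewrite sqrtr_gt0 degr_sub1_gt0.
by rewrite /branch_factor -{2}(sqr_sqrtr (ltW (degr_sub1_gt0 u))) mulrA mulVf ?mul1r ?gt_eqF.
Qed.

Lemma walk_weight_rcons s z : (1 < size s)%N ->
  walk_weight (rcons s z) = walk_weight s * branch_factor (last v0 s).
Proof.
move=> s_ge2; rewrite /walk_weight size_rcons.
rewrite (_ : (size s).+1 - 2 = (size s - 2) + 1)%N; last by lia.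
rewrite iotaD big_cat /= big_seq1 nth_rcons ifT; last by lia.
congr (_ * branch_factor _); last by rewrite -nth_last; congr nth; lia.
rewrite !big_seq; apply: eq_bigr => i; rewrite mem_iota nth_rcons => /andP[_ i_lt].
by rewrite ifT //; lia.
Qed.

Lemma penult_rcons s z : s != [::] -> penult (rcons s z) = last v0 s.
Proof.
case: s => [//|x t] _; rewrite /penult size_rcons nth_rcons -nth_last /=.
by rewrite (_ : (size t).+2 - 2 = size t)%N ?ltnSn //; lia.
Qed.

Lemma nb_stepE s z : (1 < size s)%N -> nb_step s z = e (last v0 s) z && (z != penult s).
Proof. by rewrite /nb_step ltnNge => /negbTE ->. Qed.

Lemma eq_walk_sum k (F G : seq V -> R) :
  (forall s, size s = k.+1 -> F s = G s) -> walk_sum k F = walk_sum k G.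
Proof.
move=> FG; apply: eq_bigr => v _; rewrite !big_seq; apply: eq_bigr => s.
by move/size_seqs_of_size/FG ->.
Qed.

Lemma walk_sum0 F : walk_sum 0 F = \sum_x F [:: x].
Proof.
rewrite /walk_sum exchange_big big_seqs_of_sizeS big_seq1.
apply: eq_bigr => x _; under eq_bigr do rewrite nb_walk1.
rewrite (bigD1 x) //= eqxx mul1r big1 ?addr0 // => v.
by rewrite eq_sym => /negbTE ->; rewrite mul0r.
Qed.

Lemma sum_nb_walk_rcons k (X : seq V -> V -> R) :
  \sum_v \sum_(s <- seqs_of_size V k.+1) \sum_z (nb_walk e v (rcons s z))%:R * X s z
  = walk_sum k (fun s => \sum_z (nb_step s z)%:R * X s z).
Proof.
apply: eq_bigr => v _; rewrite !big_seq; apply: eq_bigr => s /size_seqs_of_size sk.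
rewrite mulr_sumr; apply: eq_bigr => z _.
by rewrite (nb_walk_rcons _ v0) -?size_eq0 ?sk // -mulnb natrM mulrA.
Qed.

Lemma walk_sumS k F :
  walk_sum k.+1 F = walk_sum k (fun s => \sum_z (nb_step s z)%:R * F (rcons s z)).
Proof. by rewrite -sum_nb_walk_rcons; apply: eq_bigr => v _; rewrite big_seqs_of_sizeS. Qed.

Lemma sum_nb_paths2 (f : V -> V -> R) :
  \sum_x \sum_y (e x y)%:R * \sum_z (e y z && (z != x))%:R * f y z
  = \sum_y \sum_z (e y z)%:R * ((degr y - 1) * f y z).
Proof.
rewrite exchange_big; apply: eq_bigr => y _.
under eq_bigr do rewrite mulr_sumr.
rewrite exchange_big; apply: eq_bigr => z _.
case eyz : (e y z); last by rewrite [RHS]mul0r big1 // => x _; rewrite mul0r mulr0.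
rewrite -(sum_neighbours_but eyz) mul1r !mulr_suml; apply: eq_bigr => x _.
by rewrite mulrA -natrM mulnb [z == x]eq_sym.
Qed.

Lemma walk_sum_edges k (psi : V -> V -> R) :
  walk_sum k.+1 (fun s => walk_weight s ^+ 2 * psi (penult s) (last v0 s))
  = \sum_x \sum_y (e x y)%:R * psi x y.
Proof.
elim: k psi => [|k IH] psi.
  rewrite walk_sumS walk_sum0; apply: eq_bigr => x _; apply: eq_bigr => y _.
  by rewrite /nb_step /walk_weight /penult /= big_nil andbT expr1n mul1r.
pose phi x y := \sum_z (e y z && (z != x))%:R * (branch_factor y ^+ 2 * psi y z).
transitivity (walk_sum k.+1 (fun s => walk_weight s ^+ 2 * phi (penult s) (last v0 s))).
  rewrite walk_sumS; apply: eq_walk_sum => s sk; rewrite mulr_sumr; apply: eq_bigr => z _.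
  rewrite nb_stepE ?sk // walk_weight_rcons ?sk // penult_rcons -?size_eq0 ?sk //.
  by rewrite last_rcons exprMn; ring.
rewrite IH sum_nb_paths2; apply: eq_bigr => y _; apply: eq_bigr => z _.
by congr (_ * _); rewrite mulrA (mulrC (degr y - 1)) branch_factor_sqrK mul1r.
Qed.

Lemma walk_sum_nb_step k (f : V -> V -> R) :
  walk_sum k.+1 (fun s => walk_weight s ^+ 2 * \sum_z (nb_step s z)%:R * f (last v0 s) z)
  = \sum_y \sum_z (e y z)%:R * ((degr y - 1) * f y z).
Proof.
rewrite -sum_nb_paths2 -(walk_sum_edges k); apply: eq_walk_sum => s sk.
by congr (_ * _); apply: eq_bigr => z _; rewrite nb_stepE ?sk.
Qed.

End WalkSums.

Section Ball.
Variables (V : finType) (e : rel V) (v0 : V) (r : nat).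

Definition ball_seqs : seq (seq V) := flatten [seq seqs_of_size V k.+1 | k <- iota 0 r.+1].

Lemma big_ball_seqs (M : nmodType) (F : seq V -> M) :
  \sum_(s <- ball_seqs) F s = \sum_(k < r.+1) \sum_(s <- seqs_of_size V k.+1) F s.
Proof.
rewrite big_flatten big_map.
by rewrite -(big_mkord xpredT (fun k => \sum_(s <- seqs_of_size V k.+1) F s)) /index_iota subn0.
Qed.

Lemma ball_seqs_neq0 s : s \in ball_seqs -> s != [::].
Proof.
case/flattenP => _ /mapP[k _ ->].
by rewrite mem_seqs_of_size -size_eq0 => /eqP ->.
Qed.

Variables (R : realType) (v : V).

Lemma sum_ball_set (F : seq V -> R) :
  \sum_(i < #|ball_set e v r|) F (walk_seq (enum_val i))
  = \sum_(s <- ball_seqs) (nb_walk e v s)%:R * F s.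
Proof.
rewrite -(big_enum_val (fun x => F (walk_seq x))) big_mkcond big_ball_seqs /=.
transitivity (\sum_(k < r.+1) \sum_(t : k.+1.-tuple V) (nb_walk e v t)%:R * F t).
  rewrite (sig_big_dep xpredT (fun _ _ => true)
    (fun (k : 'I_r.+1) (t : k.+1.-tuple V) => (nb_walk e v t)%:R * F t)).
  by apply: eq_bigr => x _; rewrite inE; case: nb_walk; rewrite ?mul1r ?mul0r.
by apply: eq_bigr => k _; rewrite (big_tuple_seqs_of_size _ (fun s => (nb_walk e v s)%:R * F s)).
Qed.

Lemma sum_one_step_ext p (Y : seq V -> R) :
  \sum_(q <- ball_seqs) (one_step_ext p q)%:R * Y q
  = if (size p <= r)%N then \sum_z Y (rcons p z) else 0.
Proof.
have ext_rcons s z : one_step_ext p (rcons s z) = (s == p).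
  rewrite /one_step_ext size_rcons eqSS -cats1.
  have [sp|sp] := eqVneq (size s) (size p); first by rewrite take_size_cat.
  by apply/esym/eqP => spE; rewrite spE eqxx in sp.
transitivity (\sum_(j < r.+1) if j == size p :> nat then \sum_z Y (rcons p z) else 0).
  rewrite big_ball_seqs; apply: eq_bigr => j _; rewrite big_seqs_of_sizeS.
  case: eqP => [->|jp].
    rewrite (bigD1_seq p) ?mem_seqs_of_size ?uniq_seqs_of_size //=.
    rewrite [X in _ + X]big1_seq ?addr0 => [|s /andP[sp _]].
      by apply: eq_bigr => z _; rewrite ext_rcons eqxx mul1r.
    by apply: big1 => z _; rewrite ext_rcons (negbTE sp) mul0r.
  rewrite big_seq big1 // => s /size_seqs_of_size sj; apply: big1 => z _.
  rewrite ext_rcons (_ : s == p = false) ?mul0r //.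
  by apply/negbTE/eqP => sp; apply: jp; rewrite -sj sp.
case: leqP => pr.
  rewrite (bigD1 (Ordinal (pr : size p < r.+1)%N)) //= eqxx [X in _ + X]big1 ?addr0 // => j.
  by rewrite -val_eqE => /negbTE ->.
by apply: big1 => j _; rewrite ifF //; apply/negbTE; rewrite neq_ltn (leq_trans (ltn_ord j) pr).
Qed.

Variable w : V -> V -> R.
Hypothesis w_sym : forall x y, w x y = w y x.

Lemma ball_adj_sym i j : ball_adj e w v r i j = ball_adj e w v r j i.
Proof. by rewrite !mxE /= orbC w_sym. Qed.

Definition ext_term (h : seq V -> R) p q : R :=
  (one_step_ext p q)%:R * (h p * w (last v0 p) (last v0 q) * h q).

Lemma ball_adj_termE (h : seq V -> R) p q : p != [::] -> q != [::] ->
  h p * (if one_step_ext p q || one_step_ext q p then w (last v p) (last v q) else 0) * h q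
  = ext_term h p q + ext_term h q p.
Proof.
have lastE s : s != [::] -> last v s = last v0 s by case: s.
move=> p0 q0; rewrite /ext_term !lastE // [w (last v0 q) _]w_sym /one_step_ext.
case: (size q =P (size p).+1) => qp; case: (size p =P (size q).+1) => pq /=; first by lia.
- by rewrite orbF; case: (_ == p); rewrite /= ?mul1r; ring.
- by case: (_ == q); rewrite /= ?mul1r; ring.
- ring.
Qed.

Lemma sum_ext_term (h : seq V -> R) p :
  \sum_(q <- ball_seqs) (nb_walk e v q)%:R * ext_term h p q
  = if (size p <= r)%N
    then \sum_z (nb_walk e v (rcons p z))%:R * (h p * w (last v0 p) z * h (rcons p z))
    else 0.
Proof.
under eq_bigr do rewrite /ext_term mulrCA; rewrite sum_one_step_ext.
by case: ifP => // _; under eq_bigr do rewrite last_rcons.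
Qed.

Lemma quad_form_ball_adj (h : seq V -> R) :
  \sum_i \sum_j h (walk_seq (enum_val i)) * ball_adj e w v r i j * h (walk_seq (enum_val j))
  = 2 * \sum_(k < r) \sum_(s <- seqs_of_size V k.+1) \sum_z
          (nb_walk e v (rcons s z))%:R * (h s * w (last v0 s) z * h (rcons s z)).
Proof.
pose a q : R := (nb_walk e v q)%:R.
pose G p q :=
  h p * (if one_step_ext p q || one_step_ext q p then w (last v p) (last v q) else 0) * h q.
transitivity (\sum_(p <- ball_seqs) a p * \sum_(q <- ball_seqs) a q * G p q).
  rewrite -[RHS](sum_ball_set (fun p => \sum_(q <- ball_seqs) a q * G p q)).
  apply: eq_bigr => i _; rewrite -(sum_ball_set (G _)).
  by apply: eq_bigr => j _; rewrite mxE.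
transitivity (2 * \sum_(p <- ball_seqs) a p * \sum_(q <- ball_seqs) a q * ext_term h p q).
  have swap : \sum_(p <- ball_seqs) a p * \sum_(q <- ball_seqs) a q * ext_term h q p
            = \sum_(p <- ball_seqs) a p * \sum_(q <- ball_seqs) a q * ext_term h p q.
    under eq_bigr do rewrite mulr_sumr; under [RHS]eq_bigr do rewrite mulr_sumr.
    by rewrite exchange_big; apply: eq_bigr => p _; apply: eq_bigr => q _; rewrite mulrCA.
  rewrite mulr_natl mulr2n -{1}swap -big_split; apply: eq_big_seq => p p_in /=.
  rewrite -mulrDr -big_split; congr (_ * _); apply: eq_big_seq => q q_in /=.
  by rewrite -mulrDr /G ball_adj_termE ?ball_seqs_neq0 // addrC.
congr (2 * _); under eq_bigr do rewrite sum_ext_term.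
rewrite big_ball_seqs big_ord_recr (big1_seq (seqs_of_size V r.+1)) ?Monoid.mulm1; last first.
  by move=> s /andP[_]; rewrite mem_seqs_of_size => /eqP ->; rewrite ltnn mulr0.
apply: eq_bigr => k _; apply: eq_big_seq => s /size_seqs_of_size sk.
rewrite sk (ltn_ord k) mulr_sumr; apply: eq_bigr => z _; rewrite mulrA; congr (_ * _).
by rewrite /a (nb_walk_rcons _ v0) -?size_eq0 ?sk // -natrM mulnb andbA andbb.
Qed.

End Ball.

Section TestVector.
Variables (R : realType) (V : finType) (e : rel V) (v0 : V).
Hypothesis e_sym : symmetric e.
Hypothesis deg_ge2 : forall u, (2 <= deg e u)%N.
Variables (w : V -> V -> R) (g : V -> R) (r : nat).
Hypothesis g_gt0 : forall u, 0 < g u.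

Local Notation degr := (degr R e).
Local Notation walk_weight := (walk_weight R e v0).
Local Notation walk_sum := (walk_sum e).

Definition amp k : R := sin (k.+1%:R * (pi / (r + 2)%:R)).

Definition test_vec (s : seq V) : R :=
  amp (size s).-1 * Num.sqrt (g (last v0 s)) *
  (if (size s <= 1)%N then Num.sqrt (degr (last v0 s)) else walk_weight s).

Definition child_form (h : seq V -> R) (s : seq V) : R :=
  \sum_z (nb_step e v0 s z)%:R * (h s * w (last v0 s) z * h (rcons s z)).

Definition edge_form (c : V -> R) : R :=
  \sum_x c x * \sum_(z | e x z) w x z * Num.sqrt (g x * g z).

Lemma edge_formE c : edge_form c =
  \sum_x \sum_z (e x z)%:R * (c x * w x z * Num.sqrt (g x) * Num.sqrt (g z)).
Proof.
apply: eq_bigr => x _; rewrite big_mkcond mulr_sumr; apply: eq_bigr => z _.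
by case: (e x z); rewrite /= ?mul0r ?mulr0 // mul1r sqrtrM ?ltW //; ring.
Qed.

Lemma walk_sum_test_vec_sqr k :
  walk_sum k (fun s => test_vec s ^+ 2) = amp k ^+ 2 * \sum_u g u * degr u.
Proof.
case: k => [|k].
  rewrite walk_sum0 mulr_sumr; apply: eq_bigr => x _.
  by rewrite /test_vec /= !exprMn !sqr_sqrtr ?ler0n ?ltW //; ring.
have /= edgesE := walk_sum_edges v0 e_sym deg_ge2 k (fun _ y => amp k.+1 ^+ 2 * g y).
rewrite (@eq_walk_sum _ _ e k.+1 _
  (fun s => walk_weight s ^+ 2 * (amp k.+1 ^+ 2 * g (last v0 s)))); last first.
  by move=> s sk; rewrite /test_vec sk /= !exprMn sqr_sqrtr ?ltW //; ring.
rewrite edgesE mulr_sumr exchange_big; apply: eq_bigr => y _.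
rewrite -sum_neighbours !mulr_sumr; apply: eq_bigr => x _.
by rewrite e_sym; ring.
Qed.

Lemma walk_sum_child_form0 :
  walk_sum 0 (child_form test_vec) = amp 0 * amp 1 * edge_form (fun x => Num.sqrt (degr x)).
Proof.
rewrite walk_sum0 edge_formE mulr_sumr; apply: eq_bigr => x _.
rewrite mulr_sumr; apply: eq_bigr => z _.
by rewrite /test_vec /nb_step /walk_weight /= big_nil andbT; ring.
Qed.

Lemma walk_sum_child_formS k :
  walk_sum k.+1 (child_form test_vec)
  = amp k.+1 * amp k.+2 * edge_form (fun x => Num.sqrt (degr x - 1)).
Proof.
pose f y z :=
  amp k.+1 * amp k.+2 * (branch_factor R e y * (w y z * Num.sqrt (g y) * Num.sqrt (g z))).
transitivity (walk_sum k.+1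
    (fun s => walk_weight s ^+ 2 * \sum_z (nb_step e v0 s z)%:R * f (last v0 s) z)).
  apply: eq_walk_sum => s sk; rewrite mulr_sumr; apply: eq_bigr => z _.
  rewrite /test_vec size_rcons sk walk_weight_rcons ?sk // last_rcons /= /f; ring.
rewrite walk_sum_nb_step // edge_formE mulr_sumr; apply: eq_bigr => y _.
rewrite mulr_sumr; apply: eq_bigr => z _.
by rewrite /f -(branch_factorK R deg_ge2); ring.
Qed.

End TestVector.

Lemma exists_le_of_sum_le (R : realDomainType) (I : finType) (i0 : I) (F G : I -> R) :
  \sum_i F i <= \sum_i G i -> exists i, F i <= G i.
Proof.
move=> FG; suff /existsP[i FGi] : [exists i, F i <= G i] by exists i.
apply: contraLR FG => /existsPn GF; rewrite -ltNge ltr_sum //.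
  by apply/hasP; exists i0; rewrite ?mem_index_enum.
by move=> i _; rewrite ltNge GF.
Qed.

Section Main.
Variables (R : realType) (V : finType) (e : rel V) (v0 : V).
Hypothesis e_sym : symmetric e.
Hypothesis deg_ge2 : forall u, (2 <= deg e u)%N.
Variables (w : V -> V -> R) (g : V -> R) (r : nat).
Hypothesis w_sym : forall x y, w x y = w y x.
Hypothesis w_gt0 : forall x y, e x y -> 0 < w x y.
Hypothesis g_gt0 : forall u, 0 < g u.

Local Notation degr := (degr R e).
Local Notation amp := (amp R r).
Local Notation test_vec := (test_vec e v0 g r).
Local Notation edge_form := (edge_form e w g).
Local Notation theta := (pi / (r + 2)%:R : R).

Definition ball_norm v : R := \sum_(i < #|ball_set e v r|) test_vec (walk_seq (enum_val i)) ^+ 2.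

Definition ball_form v : R :=
  \sum_i \sum_j
    test_vec (walk_seq (enum_val i)) * ball_adj e w v r i j * test_vec (walk_seq (enum_val j)).

Lemma amp_gt0 k : (k <= r)%N -> 0 < amp k.
Proof.
move=> kr; have r2_gt0 : (0 : R) < (r + 2)%:R by rewrite ltr0n addn2.
apply: sin_gt0_pi; rewrite mulr_gt0 ?divr_gt0 ?pi_gt0 //=.
by rewrite mulrA ltr_pdivrMr // mulrC ltr_pM2l ?pi_gt0 // ltr_nat addn2 !ltnS.
Qed.

Lemma ler_edge_form (c c' : V -> R) : (forall x, 0 <= c x <= c' x) -> edge_form c <= edge_form c'.
Proof.
move=> cc'; apply: ler_sum => x _; apply: ler_wpM2r; last by case/andP: (cc' x).
by apply: sumr_ge0 => z exz; rewrite mulr_ge0 ?sqrtr_ge0 ?ltW ?w_gt0.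
Qed.

Lemma sum_ball_norm : \sum_v ball_norm v = (\sum_(k < r.+1) amp k ^+ 2) * \sum_u g u * degr u.
Proof.
under eq_bigr => v _ do
  rewrite /ball_norm (sum_ball_set e r v (fun s => test_vec s ^+ 2)) big_ball_seqs.
rewrite exchange_big big_distrl; apply: eq_bigr => k _.
exact: walk_sum_test_vec_sqr.
Qed.

Lemma sum_ball_form_ge :
  2 * edge_form (fun x => Num.sqrt (degr x - 1)) * (cos theta * \sum_(k < r.+1) amp k ^+ 2)
  <= \sum_v ball_form v.
Proof.
under [leRHS]eq_bigr => v _ do rewrite /ball_form (quad_form_ball_adj e v0 r v w_sym).
rewrite -mulr_sumr exchange_big -sum_sin_mul_succ; last first.
  by rewrite /amp -addn2 mulrC divfK ?sinpi // pnatr_eq0 addn2.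
rewrite -mulrA ler_wpM2l // mulr_sumr ler_sum // => k _.
rewrite (sum_nb_walk_rcons e v0) -/(child_form e v0 w test_vec).
case: (nat_of_ord k) (ltn_ord k) => [|k'] kr; last by rewrite walk_sum_child_formS // mulrC.
rewrite walk_sum_child_form0 // [X in _ <= X]mulrC.
apply: ler_wpM2r; first by rewrite mulr_ge0 // ltW // amp_gt0.
by apply: ler_edge_form => x; rewrite sqrtr_ge0 ler_sqrt ?ler0n // gerBl ler01.
Qed.

Lemma degr_gt0 u : 0 < degr u.
Proof. by rewrite ltr0n; apply: leq_trans (deg_ge2 u). Qed.

Lemma sum_g_degr_gt0 : 0 < \sum_u g u * degr u.
Proof.
rewrite (bigD1 v0) //= ltr_wpDr ?mulr_gt0 ?degr_gt0 //.
by apply: sumr_ge0 => u _; rewrite mulr_ge0 ?ltW ?degr_gt0.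
Qed.

Lemma ball_norm_gt0 v : 0 < ball_norm v.
Proof.
have term_ge0 s : 0 <= (nb_walk e v s)%:R * test_vec s ^+ 2 by rewrite mulr_ge0 ?sqr_ge0.
rewrite /ball_norm (sum_ball_set e r v (fun s => test_vec s ^+ 2)) big_ball_seqs big_ord_recl.
rewrite ltr_wpDr ?sumr_ge0 // => [k _|]; first exact: sumr_ge0.
rewrite (bigD1_seq [:: v]) ?mem_seqs_of_size ?uniq_seqs_of_size // ltr_wpDr ?sumr_ge0 //.
rewrite nb_walk1 eqxx mul1r exprn_gt0 // /test_vec /=.
by rewrite !mulr_gt0 ?amp_gt0 ?sqrtr_gt0 ?degr_gt0.
Qed.

Lemma exists_ball_form_ge :
  exists v, 2 * edge_form (fun x => Num.sqrt (degr x - 1)) / (\sum_u g u * degr u) * cos theta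
              * ball_norm v <= ball_form v.
Proof.
apply: (exists_le_of_sum_le v0); rewrite -mulr_sumr sum_ball_norm.
apply: le_trans sum_ball_form_ge; rewrite le_eqVlt; apply/orP; left; apply/eqP.
by field; apply: lt0r_neq0; apply: sum_g_degr_gt0.
Qed.

End Main.

Unset Implicit Arguments.

Theorem theorem1p5 (R : realType) (V : finType) (e : rel V) (w : V -> V -> R)
  (hsimple : simple_graph e) (hne : (0 < #|V|)%N) (hconn : connected_graph e)
  (hw : pos_weight e w) (hdeg : forall u : V, (2 <= deg e u)%N)
  (r : nat) (hr : (1 <= r)%N) (g : V -> R) (hg : forall u, 0 < g u) :
  exists v : V,
    lambda1_ball e w v r >=
      2 * (\sum_(v1 : V) Num.sqrt ((deg e v1)%:R - 1) *
             \sum_(v2 : V | e v1 v2) w v1 v2 * Num.sqrt (g v1 * g v2))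
        / (\sum_(u : V) g u * (deg e u)%:R)
        * cos (pi / (r + 2)%:R).
Proof.
case/card_gt0P: hne => v0 _; have [e_sym _] := hsimple; have [w_sym w_gt0] := hw.
have [v le_v] := exists_ball_form_ge v0 e_sym hdeg r w_sym w_gt0 hg.
exists v; rewrite -(ler_pM2r (ball_norm_gt0 v0 hdeg r hg v)).
exact: le_trans le_v (quad_form_le_spectral_radius (ball_adj_sym w_sym) _).
Qed.
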